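(* Let $I\subseteq\mathbb{R}$ be an interval, $p\in\mathbb{N}$, $\mathbf{d}=(d_1,\dots,d_p)\in\mathbb{N}^p$, $\alpha\in\mathbb{N}_p^{\mathbf{d}}$, and let $\mathbf{M}=(M_1,\dots,M_p)$ be a $\mathbf{d}$-averaging mapping on $I$ such that every $M_i$ is continuous and strict. Then there exists a unique $\mathbf{M}_\alpha$-invariant mean $K\colon I^p\to I$ if and only if the root graph $\mathcal{R}(G_\alpha)$ is ergodic.
   Context: A $k$-variable mean on an interval $I$ is a function $M\colon I^k\to I$ with $\min(x)\le M(x)\le\max(x)$ for all $x\in I^k$; it is strict if both inequalities are strict for every nonconstant $x$. A function $K\colon I^p\to I$ is $\mathbf{F}$-invariant for a map $\mathbf{F}\colon I^p\to I^p$ if $K\circ\mathbf{F}=K$. Notation: $\mathbb{N}_p=\{1,\dots,p\}$, $\mathbb{N}_p^{\mathbf{d}}=\mathbb{N}_p^{d_1}\times\dots\times\mathbb{N}_p^{d_p}$. A $\mathbf{d}$-averaging mapping on $I$ is a sequence $(M_1,\dots,M_p)$ where each $M_i$ is a $d_i$-variable mean on $I$. For $\alpha=(\alpha_1,\dots,\alpha_p)\in\mathbb{N}_p^{\mathbf{d}}$, $\alpha_i=(\alpha_{i,1},\dots,\alpha_{i,d_i})$, define $\mathbf{M}_\alpha\colon I^p\to I^p$ by $\mathbf{M}_\alpha(x)=\big(M_i(x_{\alpha_{i,1}},\dots,x_{\alpha_{i,d_i}})\big)_{i=1}^p$. The $\alpha$-incidence graph is $G_\alpha=(\mathbb{N}_p,E_\alpha)$,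 $E_\alpha=\{(\alpha_{i,j},i): i\in\mathbb{N}_p, j\in\mathbb{N}_{d_i}\}$. A digraph is ergodic if it is nonempty, irreducible (walks exist between any two vertices) and aperiodic (no integer $k>1$ divides the length of every cycle). The root $R(G)$ of a digraph $G$ is the union of the strongly connected components (classes of mutual reachability) that receive no edge from a vertex of another component; the root graph $\mathcal{R}(G)$ is the subgraph of $G$ induced by $R(G)$. *)

From HB Require Import structures.
From mathcomp Require Import all_boot all_order all_algebra.
From mathcomp Require Import reals.
Set Implicit Arguments. Unset Strict Implicit. Unset Printing Implicit Defensive.
Import Order.TTheory GRing.Theory Num.Theory.
Local Open Scope ring_scope.

Section Defs.
Variable R : realType.

Definition is_interval (I : R -> Prop) : Prop :=
  (forall x y z, I x -> I z -> x <= y -> y <= z -> I y) /\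
  (exists a b, I a /\ I b /\ a < b).

Definition inI (I : R -> Prop) (k : nat) (x : 'I_k -> R) : Prop :=
  forall j, I (x j).

(* min(x) and max(x) of a finite family (the seed 'head' is one of the x j's
   when k > 0, so it does not affect the value). *)
Definition vmin (k : nat) (x : 'I_k -> R) : R :=
  \big[Num.min/head 0 [seq x j | j <- enum 'I_k]]_(j < k) x j.
Definition vmax (k : nat) (x : 'I_k -> R) : R :=
  \big[Num.max/head 0 [seq x j | j <- enum 'I_k]]_(j < k) x j.

Definition is_mean (I : R -> Prop) (k : nat) (M : ('I_k -> R) -> R) : Prop :=
  forall x, inI I x -> I (M x) /\ vmin x <= M x /\ M x <= vmax x.

Definition nonconstant (k : nat) (x : 'I_k -> R) : Prop :=
  exists j j', x j != x j'.

Definition is_strict_mean (I : R -> Prop) (k : nat) (M : ('I_k -> R) -> R) : Prop :=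
  is_mean I M /\
  forall x, inI I x -> nonconstant x -> vmin x < M x /\ M x < vmax x.

Definition continuous_on_Ik (I : R -> Prop) (k : nat) (M : ('I_k -> R) -> R) : Prop :=
  forall x, inI I x -> forall eps : R, 0 < eps -> exists2 delta : R, 0 < delta &
    forall y, inI I y -> (forall j, `|y j - x j| < delta) -> `|M y - M x| < eps.

Definition Malpha (p : nat) (d : 'I_p -> nat)
  (M : forall i : 'I_p, ('I_(d i) -> R) -> R)
  (alpha : forall i : 'I_p, 'I_(d i) -> 'I_p) (x : 'I_p -> R) : 'I_p -> R :=
  fun i => M i (fun j => x (alpha i j)).

Definition is_invariant (I : R -> Prop) (p : nat) (F : ('I_p -> R) -> ('I_p -> R))
  (K : ('I_p -> R) -> R) : Prop :=
  forall x, inI I x -> K (F x) = K x.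

End Defs.

Definition incidence_rel (p : nat) (d : 'I_p -> nat)
  (alpha : forall i : 'I_p, 'I_(d i) -> 'I_p) : rel 'I_p :=
  fun a b => [exists j : 'I_(d b), alpha b j == a].

Section Graphs.
Variable T : finType.

Definition scc (E : rel T) (v : T) : {set T} :=
  [set u | connect E u v && connect E v u].

(* root R(G): union of the strongly connected components receiving no edge
   from a vertex of another component *)
Definition root_set (E : rel T) : {set T} :=
  [set v | [forall a, forall b,
      (E a b && (b \in scc E v)) ==> (a \in scc E v)]].

Definition walk_in (V : {set T}) (E : rel T) (a : T) (s : seq T) : bool :=
  (a \in V) && path (fun x y => E x y && (y \in V)) a s.

(* ergodic digraph (V, E restricted to V): nonempty, irreducible, aperiodic;
   cycles are closed walks of positive length *)
Definition ergodic (V : {set T}) (E : rel T) : Prop :=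
  [/\ V != set0,
      (forall a b, a \in V -> b \in V ->
         exists s, walk_in V E a s /\ last a s = b) &
      (forall k : nat, (1 < k)%N ->
         exists a s, [/\ walk_in V E a s, last a s = a, (0 < size s)%N
                       & ~~ (k %| size s)%N])].

End Graphs.

(* Let [lower_mean x] and [upper_mean x] be the limits of the minima and of the
   maxima of the vectors along the orbit of [x] under [M_alpha].  Both are
   invariant means, and every invariant mean lies between them, so a unique
   invariant mean exists iff they agree on [I^p].
   If the root graph is ergodic, it is primitive: from some root vertex [r]
   there are walks of every length [N >= N0] to every vertex.  Every iterate of
   a cluster point [y] of the orbit is again a cluster point, hence has minimum
   [lower_mean x] and maximum [upper_mean x].  By strictness, an extremal value
   of [M_alpha^N y] is propagated back along walks of length [N], so [y r]
   equals both bounds.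
   Conversely, if the root contains two strongly connected components, or has
   period [k > 1], a vector taking two values on two components (resp. on the
   phase classes modulo [k]) keeps both values along its orbit, which
   separates [lower_mean] from [upper_mean]. *)

From HB Require Import structures.
From mathcomp Require Import all_boot all_order all_algebra.
From mathcomp Require Import boolp classical_sets reals topology normedtype sequences.
From mathcomp Require Import zify lra.

Set Implicit Arguments.
Unset Strict Implicit.
Unset Printing Implicit Defensive.
Import Order.TTheory GRing.Theory Num.Theory numFieldNormedType.Exports.

Section Walks.
Variables (T : finType) (E : rel T).

Fixpoint walkn (n : nat) (u v : T) : Prop :=
  if n is n'.+1 then exists2 w, walkn n' u w & E w v else u = v.

Lemma walknP n u v :
  walkn n u v <-> exists s, [/\ path E u s, last u s = v & size s = n].
Proof.
elim: n v => [|n IHn] v /=.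
  by split=> [->|[s [_ <- /size0nil ->]]] //; exists [::].
split=> [[w /IHn[s [Ps <- <-]] Ewv]|[s []]].
  by exists (rcons s v); rewrite rcons_path last_rcons size_rcons Ps Ewv.
case/lastP: s => [//|s w]; rewrite rcons_path last_rcons size_rcons.
by case/andP=> Ps Ew <- [sn]; exists (last u s) => //; apply/IHn; exists s.
Qed.

Lemma walkn_cat m n u w v : walkn m u w -> walkn n w v -> walkn (m + n) u v.
Proof.
move=> Wm; elim: n v => [|n IHn] v /=; first by rewrite addn0 => <-.
by case=> w' Ww' Ew'v; rewrite addnS; exists w' => //; apply: IHn.
Qed.

Lemma walkn_split m n u v : m <= n -> walkn n u v ->
  exists2 w, walkn m u w & walkn (n - m) w v.
Proof.
elim: n v => [|n IHn] v; first by rewrite leqn0 => /eqP -> /= ->; exists v.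
rewrite leq_eqVlt => /orP[/eqP -> W|]; first by exists v; rewrite ?subnn.
rewrite ltnS => mn /= [w /(IHn _ mn)[w' W1 W2] Ewv].
by exists w' => //; rewrite subSn //; exists w.
Qed.

Lemma walkn_iter m n u : walkn m u u -> walkn (n * m) u u.
Proof.
by move=> W; elim: n => [|n IHn] //; rewrite mulSn; apply: walkn_cat W IHn.
Qed.

Lemma connect_walknP u v : connect E u v <-> exists n, walkn n u v.
Proof.
split=> [/connectP[s Ps ->]|[n /walknP[s [Ps <- _]]]].
  by exists (size s); apply/walknP; exists s.
by apply/connectP; exists s.
Qed.

Lemma scc_sym u v : (u \in scc E v) = (v \in scc E u).
Proof. by rewrite !inE andbC. Qed.

Lemma scc_trans v u w : u \in scc E v -> v \in scc E w -> u \in scc E w.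
Proof.
rewrite !inE => /andP[uv vu] /andP[vw wv].
by rewrite (connect_trans uv vw) (connect_trans wv vu).
Qed.

Lemma scc_refl v : v \in scc E v.
Proof. by rewrite inE connect0. Qed.

Lemma root_scc_pred v a b :
  v \in root_set E -> E a b -> b \in scc E v -> a \in scc E v.
Proof. by rewrite inE => /forallP/(_ a)/forallP/(_ b)/implyP + Eab bv; apply; rewrite Eab. Qed.

Lemma root_connect_scc v u : v \in root_set E -> connect E u v -> u \in scc E v.
Proof.
move=> rv /connectP[s]; elim: s u => [|w s IHs] u /=; first by move=> _ ->; apply: scc_refl.
by case/andP=> Euw Ps lst; apply: root_scc_pred rv Euw (IHs _ Ps lst).
Qed.

Lemma root_set_scc v u : v \in root_set E -> u \in scc E v -> u \in root_set E.
Proof.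
move=> rv uv; rewrite inE; apply/forallP=> a; apply/forallP=> b; apply/implyP.
case/andP=> Eab bu; apply: scc_trans (root_scc_pred rv Eab (scc_trans bu uv)) _.
by rewrite scc_sym.
Qed.

(* A vertex whose set of ancestors is minimal lies in the root. *)
Lemma exists_root_connect v : exists2 r, r \in root_set E & connect E r v.
Proof.
pose anc w := [set u | connect E u w].
have [r rv rmin] := @arg_minnP T v (connect E ^~ v) (fun w => #|anc w|) (connect0 E v).
exists r => //; rewrite inE; apply/forallP=> a; apply/forallP=> b; apply/implyP.
case/andP=> Eab; rewrite !inE => /andP[br rb].
have ar : connect E a r := connect_trans (connect1 Eab) br.
have sub : anc a \subset anc r.
  by apply/fintype.subsetP=> u; rewrite !inE => /connect_trans; apply.
have /eqP eq_anc : anc a == anc r by rewrite eqEcard sub rmin ?(connect_trans ar).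
have : r \in anc a by rewrite eq_anc inE connect0.
by rewrite inE ar.
Qed.

Lemma root_walk_in v a s :
  v \in root_set E -> path E a s -> last a s = v -> walk_in (root_set E) E a s.
Proof.
move=> rv; elim: s a => [|w s IHs] a /=; first by move=> _ av; subst v; rewrite /walk_in rv.
case/andP=> Eaw Ps lst; have /andP[wV Ws] := IHs _ Ps lst.
have au : a \in scc E v.
  by apply: root_connect_scc rv _; apply/connectP; exists (w :: s); rewrite /= ?Eaw.
by rewrite /walk_in /= Eaw wV Ws (root_set_scc rv au).
Qed.

Lemma walk_in_walkn V a s : walk_in V E a s -> walkn (size s) a (last a s).
Proof.
case/andP=> _ Ps; apply/walknP; exists s; split=> //.
by apply: sub_path Ps => x y /andP[].
Qed.

Lemma root_connect_walk_in a b : b \in root_set E -> connect E a b ->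
  exists s, walk_in (root_set E) E a s /\ last a s = b.
Proof.
move=> bV /connectP[s Ps lst]; exists s.
by split; [apply: root_walk_in bV Ps (esym lst) | rewrite lst].
Qed.

End Walks.

Section AdditiveSemigroup.
Variable S : nat -> Prop.
Hypothesis S0 : S 0.
Hypothesis SD : forall m n, S m -> S n -> S (m + n).
Hypothesis S_ndvd : forall k, 1 < k -> exists2 e, S e & ~~ (k %| e).

Lemma semigroup_mul m n : S m -> S (n * m).
Proof. by move=> Sm; elim: n => [|n IHn] //; rewrite mulSn; apply: SD. Qed.

(* Euclid's algorithm on the gaps [g] between two elements [Q] and [Q + g] of [S]. *)
Lemma semigroup_consecutive : exists Q, S Q /\ S Q.+1.
Proof.
suff gap1 g : 0 < g -> (exists Q, S Q /\ S (Q + g)) -> exists Q, S Q /\ S Q.+1.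
  have [e Se odd_e] := S_ndvd (ltnSn 1).
  by apply: (gap1 e); [case: e Se odd_e | exists 0].
elim/ltn_ind: g => g IHg g_gt0 [Q [SQ SQg]].
have [g_lt1|g_gt1|g1] := ltngtP g 1; [lia | | by exists Q; rewrite -addn1 -g1].
have [e Se ndvd] := S_ndvd g_gt1.
have [km kn def_g _] := egcdnP e g_gt0.
apply: (IHg (gcdn g e)); rewrite ?gcdn_gt0 ?g_gt0 //.
  rewrite ltn_neqAle dvdn_leq ?dvdn_gcdl // andbT.
  by apply: contraNneq ndvd => <-; apply: dvdn_gcdr.
exists (km * Q + kn * e); split; first by apply: SD; apply: semigroup_mul.
by rewrite -addnA -def_g -mulnDr; apply: semigroup_mul.
Qed.

Lemma semigroup_eventually : exists N, forall n, N <= n -> S n.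
Proof.
have [Q [SQ SQ1]] := semigroup_consecutive.
exists (Q * Q) => n QQn; have [Q0|Q_gt0] := posnP Q.
  by rewrite -(muln1 n); apply: semigroup_mul; rewrite -Q0.
rewrite (divn_eq n Q).
have r_le_q : n %% Q <= n %/ Q.
  by apply: leq_trans (ltnW (ltn_pmod n Q_gt0)) _; rewrite leq_divRL.
rewrite -(subnK r_le_q) mulnDl -addnA -mulnSr.
by apply: SD; apply: semigroup_mul.
Qed.

End AdditiveSemigroup.

Section Ergodic.
Variables (T : finType) (E : rel T).
Local Notation V := (root_set E).

Lemma ergodic_primitive : ergodic V E ->
  exists2 r, r \in V & exists N, forall n, N <= n -> forall v, walkn E n r v.
Proof.
case=> /set0Pn[r rV] irr aper; exists r => //.
have walk_root a b : a \in V -> b \in V -> exists n, walkn E n a b.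
  move=> aV bV; have [s [Ws <-]] := irr a b aV bV.
  by exists (size s); apply: walk_in_walkn Ws.
have [N0 cycle_r] : exists N, forall n, N <= n -> walkn E n r r.
  apply: (@semigroup_eventually (fun n => walkn E n r r)) => [//|m n|k k_gt1].
    exact: walkn_cat.
  have [a [s [Ws lst _ ndvd]]] := aper k k_gt1.
  have aV : a \in V by case/andP: Ws.
  have [n1 W1] := walk_root r a rV aV; have [n2 W2] := walk_root a r aV rV.
  have Wc := walk_in_walkn Ws; rewrite lst in Wc.
  have [dvd_k|] := boolP (k %| n1 + n2); last by exists (n1 + n2); first exact: walkn_cat W1 W2.
  exists (n1 + size s + n2); first exact: walkn_cat (walkn_cat W1 Wc) W2.
  by rewrite addnAC dvdn_addr.
have /choice[N Nv] v : exists N, forall n, N <= n -> walkn E n r v.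
  have [r' r'V /connect_walknP[m Wm]] := exists_root_connect E v.
  have [l Wl] := walk_root r r' rV r'V.
  exists (N0 + (l + m)) => n Nn; rewrite -(subnK (leq_trans (leq_addl N0 _) Nn)) addnA.
  by apply: walkn_cat Wm; apply: walkn_cat Wl; apply: cycle_r; lia.
by exists (\max_v N v) => n Nn v; apply: Nv; apply: leq_trans (leq_bigmax v) Nn.
Qed.

End Ergodic.

Section Phase.
Variables (T : finType) (E : rel T) (k : nat) (r0 : T).
Hypothesis k_gt1 : 1 < k.
Hypothesis r0_root : r0 \in root_set E.
Hypothesis root_cycle_dvd :
  forall a s, walk_in (root_set E) E a s -> last a s = a -> k %| size s.

Definition phase (v : T) (m : nat) : Prop :=
  exists2 n, walkn E n r0 v & n = m %[mod k].

Lemma walkn_scc_modk v n1 n2 : v \in scc E r0 ->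
  walkn E n1 r0 v -> walkn E n2 r0 v -> n1 = n2 %[mod k].
Proof.
rewrite inE => /andP[/connect_walknP[l Wl] _] W1 W2.
have dvd_cycle n : walkn E n r0 v -> k %| n + l.
  move=> /walkn_cat/(_ Wl)/walknP[s [Ps lst <-]].
  exact: root_cycle_dvd (root_walk_in r0_root Ps lst) lst.
apply/eqP; rewrite -(eqn_modDr l).
by move: (dvd_cycle _ W1) (dvd_cycle _ W2); rewrite /dvdn => /eqP-> /eqP->.
Qed.

Lemma phase_edge u v m : E u v -> v \in scc E r0 -> phase u m <-> phase v m.+1.
Proof.
move=> Euv vr; have ur := root_scc_pred r0_root Euv vr.
split=> [[n Wn nm]|[n' Wn' nm]].
  by exists n.+1; [exists u | rewrite -addn1 -[m.+1]addn1 -modnDml nm modnDml].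
have /connect_walknP[n Wn] : connect E r0 u by move: ur; rewrite inE => /andP[].
exists n => //; apply/eqP; rewrite -(eqn_modDr 1) !addn1 -nm.
by apply/eqP; apply: (walkn_scc_modk vr _ Wn'); exists u.
Qed.

Lemma phase_split m : (forall v, exists u, E u v) ->
  (exists2 v, v \in scc E r0 & phase v m) /\ (exists2 v, v \in scc E r0 & ~ phase v m).
Proof.
move=> has_pred; have [u Eur] := has_pred r0.
have /connect_walknP[l Wl] : connect E r0 u.
  by move: (root_scc_pred r0_root Eur (scc_refl E r0)); rewrite inE => /andP[].
have cyc : walkn E (m.+1 * l.+1) r0 r0 by apply: walkn_iter; exists u.
have on_cycle j w : walkn E j r0 w -> walkn E (m.+1 * l.+1 - j) w r0 -> w \in scc E r0.
  move=> Wj Wr; rewrite inE; apply/andP.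
  by split; apply/connect_walknP; [exists (m.+1 * l.+1 - j) | exists j].
have m_le : m.+1 <= m.+1 * l.+1 by rewrite leq_pmulr.
split.
  have [w W1 W2] := walkn_split (ltnW m_le) cyc.
  by exists w; [apply: on_cycle W1 W2 | exists m].
have [w W1 W2] := walkn_split m_le cyc.
exists w; first exact: on_cycle W1 W2.
case=> n Wn; rewrite (walkn_scc_modk (on_cycle _ _ W1 W2) Wn W1) => /eqP.
by rewrite -addn1 -{2}[m]addn0 eqn_modDl mod0n modn_small.
Qed.

End Phase.

Local Open Scope classical_set_scope.
Local Open Scope ring_scope.

Lemma increasing_seq_cvgny (f : nat -> nat) : increasing_seq f -> f @ \oo --> \oo.
Proof.
move=> f_incr; have le_f n : (n <= f n)%N.
  by elim: n => // n IHn; apply: leq_ltn_trans IHn _; rewrite (leqW_mono f_incr).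
by apply/cvgnyPge => A; exists A => // n /= An; apply: leq_trans An (le_f n).
Qed.

Section BoundedSequences.
Variable R : realType.

Lemma bounded_subseq_cvg (T : eqType) (u : nat -> T -> R) (C : R) (s : seq T) :
  (forall n j, `|u n j| <= C) ->
  exists2 f : nat -> nat, increasing_seq f &
    exists y : T -> R, forall j, j \in s -> (fun n => u (f n) j) @ \oo --> y j.
Proof.
move=> uC; elim: s => [|j0 s [f f_incr [y yP]]].
  by exists id => //; exists (fun=> 0).
have /bolzano_weierstrass[g g_incr cvg_g] : bounded_fun (fun n => u (f n) j0).
  by exists C; split; rewrite ?num_real // => c Cc n _; apply: le_trans (uC _ _) (ltW Cc).
exists (f \o g) => [m n /=|]; first by rewrite f_incr; apply: g_incr.
exists (fun j => if j == j0 then lim ((fun n => u (f n) j0) \o g @ \oo) else y j) => j.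
rewrite in_cons; case: eqP => [-> _|_ /= js]; first exact: cvg_g.
exact: cvg_comp (increasing_seq_cvgny g_incr) (yP j js).
Qed.

Lemma bounded_seq_cluster (T : finType) (u : nat -> T -> R) (C : R) :
  (forall n j, `|u n j| <= C) ->
  exists y : T -> R, forall e, 0 < e -> forall N,
    exists2 n, (N <= n)%N & forall j, `|u n j - y j| < e.
Proof.
move=> /(bounded_subseq_cvg (enum T))[f f_incr [y yP]].
exists y => e e_gt0 N.
have [M _ HM] : \forall n \near \oo, forall j, `|y j - u (f n) j| < e.
  apply: filter_forall => j.
  exact: (cvgrPdist_lt _ _).1 (yP j (mem_enum _ _)) e e_gt0.
exists (f (maxn N M)) => [|j]; last by rewrite distrC; apply: HM; apply: leq_maxr.
apply: leq_trans (leq_maxl N M) _.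
by elim: (maxn N M) => // n IHn; apply: leq_ltn_trans IHn _; rewrite (leqW_mono f_incr).
Qed.

End BoundedSequences.

Section Means.
Variables (R : realType) (I : R -> Prop) (k : nat).
Implicit Types (x z : 'I_k -> R) (M : ('I_k -> R) -> R).

Lemma vmin_le x j : vmin x <= x j.
Proof. exact: bigmin_le. Qed.

Lemma vmax_ge x j : x j <= vmax x.
Proof. exact: le_bigmax. Qed.

Hypothesis k_gt0 : (0 < k)%N.

Lemma vseedP x : exists j, head 0 [seq x j | j <- enum 'I_k] = x j.
Proof.
have : Ordinal k_gt0 \in enum 'I_k by rewrite mem_enum.
by case: (enum 'I_k) => [//|j s _]; exists j.
Qed.

Lemma vminP x : exists j, vmin x = x j.
Proof.
rewrite /vmin; elim/big_ind: _ => [|_ _ [i ->] [j ->]|j _]; last by exists j.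
  exact: vseedP.
by case: (leP (x i) (x j)); [exists i | exists j].
Qed.

Lemma vmaxP x : exists j, vmax x = x j.
Proof.
rewrite /vmax; elim/big_ind: _ => [|_ _ [i ->] [j ->]|j _]; last by exists j.
  exact: vseedP.
by case: (leP (x i) (x j)); [exists j | exists i].
Qed.

Lemma le_vmin x c : (forall j, c <= x j) -> c <= vmin x.
Proof. by move=> c_le; have [j ->] := vminP x; apply: c_le. Qed.

Lemma vmax_le x c : (forall j, x j <= c) -> vmax x <= c.
Proof. by move=> le_c; have [j ->] := vmaxP x; apply: le_c. Qed.

Lemma interval_vmin_vmax x c : is_interval I -> inI I x ->
  vmin x <= c -> c <= vmax x -> I c.
Proof.
case=> convI _ Ix; have [i ->] := vminP x; have [j ->] := vmaxP x.
exact: convI (Ix i) (Ix j).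
Qed.

Lemma mean_cst M z c : is_mean I M -> inI I z -> (forall j, z j = c) -> M z = c.
Proof.
move=> meanM Iz zc; have [_ [le_min le_max]] := meanM z Iz.
have [i min_i] := vminP z; have [j max_j] := vmaxP z.
by apply/le_anti; rewrite -{1}(zc j) -max_j le_max -(zc i) -min_i.
Qed.

Lemma strict_mean_extremal M z c : is_strict_mean I M -> inI I z -> M z = c ->
  (forall j, c <= z j) \/ (forall j, z j <= c) -> forall j, z j = c.
Proof.
case=> meanM strictM Iz Mzc bound_c j.
have [/(strictM z Iz)[lt_min lt_max]|cst] := pselect (nonconstant z).
  exfalso; case: bound_c => [/le_vmin|/vmax_le]; rewrite -Mzc; lra.
have zj i : z i = z j by apply: contrapT => /eqP ne; apply: cst; exists i, j.
by rewrite -Mzc (mean_cst meanM Iz zj).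
Qed.

End Means.

Section InvariantMeans.
Variables (R : realType) (I : R -> Prop) (p : nat) (d : 'I_p -> nat).
Variable alpha : forall i : 'I_p, 'I_(d i) -> 'I_p.
Variable M : forall i : 'I_p, ('I_(d i) -> R) -> R.
Arguments alpha : clear implicits.
Arguments M : clear implicits.
Hypothesis I_interval : is_interval I.
Hypothesis p_gt0 : (0 < p)%N.
Hypothesis d_gt0 : forall i, (0 < d i)%N.
Hypothesis M_strict : forall i, is_strict_mean I (M i).
Hypothesis M_continuous : forall i, continuous_on_Ik I (M i).

Local Notation F := (Malpha M alpha).
Local Notation E := (incidence_rel alpha).
Implicit Types (x y z : 'I_p -> R) (K : ('I_p -> R) -> R).

Lemma M_mean i : is_mean I (M i).
Proof. exact: (M_strict i).1. Qed.

Lemma M_bounds i (z : 'I_(d i) -> R) :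
  inI I z -> [/\ I (M i z), vmin z <= M i z & M i z <= vmax z].
Proof. by move=> Iz; have [? []] := M_mean Iz. Qed.

Lemma inI_F x : inI I x -> inI I (F x).
Proof. by move=> Ix i; have [] := M_bounds (fun j => Ix (alpha i j)). Qed.

Lemma inI_iter n x : inI I x -> inI I (iter n F x).
Proof. by move=> Ix; elim: n => //= n; apply: inI_F. Qed.

Lemma vmin_F x : inI I x -> vmin x <= vmin (F x).
Proof.
move=> Ix; apply: (le_vmin p_gt0) => i.
have [_ + _] := M_bounds (fun j => Ix (alpha i j)); apply: le_trans.
by apply: (le_vmin (d_gt0 i)) => j; apply: vmin_le.
Qed.

Lemma vmax_F x : inI I x -> vmax (F x) <= vmax x.
Proof.
move=> Ix; apply: (vmax_le p_gt0) => i.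
have [_ _] := M_bounds (fun j => Ix (alpha i j)); move/le_trans; apply.
by apply: (vmax_le (d_gt0 i)) => j; apply: vmax_ge.
Qed.

Definition orbit_min x n := vmin (iter n F x).
Definition orbit_max x n := vmax (iter n F x).

Lemma orbit_min_nondecreasing x : inI I x -> nondecreasing_seq (orbit_min x).
Proof. by move=> Ix; apply/nondecreasing_seqP => n; apply/vmin_F/inI_iter. Qed.

Lemma orbit_max_nonincreasing x : inI I x -> nonincreasing_seq (orbit_max x).
Proof. by move=> Ix; apply/nonincreasing_seqP => n; apply/vmax_F/inI_iter. Qed.

Lemma orbit_min_le_max x m n : inI I x -> orbit_min x m <= orbit_max x n.
Proof.
move=> Ix; apply: le_trans (orbit_min_nondecreasing Ix (leq_maxl m n)) _.
apply: le_trans _ (orbit_max_nonincreasing Ix (leq_maxr m n)).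
by apply: le_trans (vmin_le _ (Ordinal p_gt0)) (vmax_ge _ _).
Qed.

Lemma orbit_min_F x n : orbit_min (F x) n = orbit_min x n.+1.
Proof. by rewrite /orbit_min iterSr. Qed.

Lemma orbit_max_F x n : orbit_max (F x) n = orbit_max x n.+1.
Proof. by rewrite /orbit_max iterSr. Qed.

Definition lower_mean x := sup (range (orbit_min x)).
Definition upper_mean x := inf (range (orbit_max x)).

Lemma orbit_min_le_lower x n : inI I x -> orbit_min x n <= lower_mean x.
Proof.
move=> Ix; apply: ub_le_sup; last by exists n.
by exists (orbit_max x 0) => _ [m _ <-]; apply: orbit_min_le_max.
Qed.

Lemma lower_mean_le x c : (forall n, orbit_min x n <= c) -> lower_mean x <= c.
Proof. by move=> le_c; apply: ge_sup; [exists (orbit_min x 0), 0%N | move=> _ [n _ <-]]. Qed.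

Lemma upper_le_orbit_max x n : inI I x -> upper_mean x <= orbit_max x n.
Proof.
move=> Ix; apply: ge_inf; last by exists n.
by exists (orbit_min x 0) => _ [m _ <-]; apply: orbit_min_le_max.
Qed.

Lemma le_upper_mean x c : (forall n, c <= orbit_max x n) -> c <= upper_mean x.
Proof. by move=> c_le; apply: lb_le_inf; [exists (orbit_max x 0), 0%N | move=> _ [n _ <-]]. Qed.

Lemma lower_le_upper x : inI I x -> lower_mean x <= upper_mean x.
Proof.
by move=> Ix; apply: lower_mean_le => m; apply: le_upper_mean => n; apply: orbit_min_le_max.
Qed.

Lemma lower_mean_F x : inI I x -> lower_mean (F x) = lower_mean x.
Proof.
move=> Ix; apply/le_anti/andP; split; apply: lower_mean_le => n.
  by rewrite orbit_min_F; apply: orbit_min_le_lower.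
apply: le_trans (orbit_min_nondecreasing Ix (leqnSn n)) _.
by rewrite -orbit_min_F; apply/orbit_min_le_lower/inI_F.
Qed.

Lemma upper_mean_F x : inI I x -> upper_mean (F x) = upper_mean x.
Proof.
move=> Ix; apply/le_anti/andP; split; apply: le_upper_mean => n.
  apply: le_trans _ (orbit_max_nonincreasing Ix (leqnSn n)).
  by rewrite -orbit_max_F; apply/upper_le_orbit_max/inI_F.
by rewrite orbit_max_F; apply: upper_le_orbit_max.
Qed.

Lemma mean_between_orbit_bounds K : (forall x, inI I x ->
  orbit_min x 0 <= K x /\ K x <= orbit_max x 0) -> is_mean I K.
Proof.
move=> bounds x Ix; have [lo hi] := bounds x Ix.
by split; [exact: (interval_vmin_vmax (c := K x) p_gt0 I_interval Ix lo hi) | split].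
Qed.

Lemma lower_mean_is_mean : is_mean I lower_mean.
Proof.
apply: mean_between_orbit_bounds => x Ix; split; first exact: orbit_min_le_lower.
by apply: le_trans (lower_le_upper Ix) (upper_le_orbit_max 0 Ix).
Qed.

Lemma upper_mean_is_mean : is_mean I upper_mean.
Proof.
apply: mean_between_orbit_bounds => x Ix; split; last exact: upper_le_orbit_max.
by apply: le_trans (orbit_min_le_lower 0 Ix) (lower_le_upper Ix).
Qed.

Lemma invariant_mean_between K x : is_mean I K -> is_invariant I F K -> inI I x ->
  lower_mean x <= K x /\ K x <= upper_mean x.
Proof.
move=> meanK invK Ix.
have orbit_bounds n : orbit_min x n <= K x /\ K x <= orbit_max x n.
  have -> : K x = K (iter n F x).
    by elim: n => //= n ->; rewrite invK //; apply: inI_iter.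
  by have [_] := meanK _ (inI_iter n Ix).
by split; [apply: lower_mean_le | apply: le_upper_mean] => n; have [] := orbit_bounds n.
Qed.

Lemma unique_invariant_meanP :
  (exists K, is_mean I K /\ is_invariant I F K /\
     (forall K', is_mean I K' -> is_invariant I F K' -> forall x, inI I x -> K' x = K x))
  <-> forall x, inI I x -> lower_mean x = upper_mean x.
Proof.
split=> [[K [_ [_ uniqK]]] x Ix|eq_means].
  rewrite (uniqK _ lower_mean_is_mean) ?(uniqK _ upper_mean_is_mean) // => y Iy.
    by rewrite upper_mean_F.
  by rewrite lower_mean_F.
exists lower_mean; split; first exact: lower_mean_is_mean.
split=> [x Ix|K meanK invK x Ix]; first by rewrite lower_mean_F.
have [lo hi] := invariant_mean_between meanK invK Ix.
by apply/le_anti; rewrite lo (eq_means x Ix) hi.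
Qed.



Lemma F_continuous x : inI I x -> forall e, 0 < e -> exists2 δ, 0 < δ &
  forall z, inI I z -> (forall j, `|z j - x j| < δ) -> forall i, `|F z i - F x i| < e.
Proof.
move=> Ix e e_gt0.
have /choice[δ δP] i : exists δ, 0 < δ /\ forall z : 'I_(d i) -> R, inI I z ->
    (forall j, `|z j - x (alpha i j)| < δ) -> `|M i z - F x i| < e.
  have [δ δ_gt0 δP] := M_continuous (fun j => Ix (alpha i j)) e_gt0.
  by exists δ; split=> // z; apply: δP.
exists (\big[Num.min/1]_i δ i) => [|z Iz near_z i].
  by elim/big_ind: _ => // [a b|i _]; [rewrite lt_min => -> -> | case: (δP i)].
apply: (δP i).2 => [j|j]; first exact: Iz.
exact: lt_le_trans (near_z _) (bigmin_le _ _ _).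
Qed.

Lemma iter_continuous n x : inI I x -> forall e, 0 < e -> exists2 δ, 0 < δ &
  forall z, inI I z -> (forall j, `|z j - x j| < δ) ->
    forall i, `|iter n F z i - iter n F x i| < e.
Proof.
move=> Ix; elim: n => [|n IHn] e e_gt0; first by exists e.
have [δ1 δ1_gt0 δ1P] := F_continuous (inI_iter n Ix) e_gt0.
have [δ δ_gt0 δP] := IHn δ1 δ1_gt0.
by exists δ => // z Iz near_z i; apply: δ1P; [apply: inI_iter | apply: δP].
Qed.


Definition orbit_cluster x y := forall e, 0 < e -> forall N,
  exists2 n, (N <= n)%N & forall j, `|iter n F x j - y j| < e.

Lemma orbit_cluster_exists x : inI I x -> exists y, orbit_cluster x y.
Proof.
move=> Ix; apply: (bounded_seq_cluster (C := `|vmin x| + `|vmax x|)) => n j.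
have lo : vmin x <= iter n F x j.
  exact: le_trans (orbit_min_nondecreasing Ix (leq0n n)) (vmin_le _ j).
have hi : iter n F x j <= vmax x.
  exact: le_trans (vmax_ge _ j) (orbit_max_nonincreasing Ix (leq0n n)).
have := normr_ge0 (vmin x); have := normr_ge0 (vmax x).
have := ler_norm (vmax x); have := ler_norm (- vmin x); rewrite normrN => ? ? ? ?.
by rewrite ler_norml; apply/andP; split; lra.
Qed.

Lemma orbit_cluster_bounds x y n j : inI I x -> orbit_cluster x y ->
  orbit_min x n <= y j /\ y j <= orbit_max x n.
Proof.
move=> Ix cl; split; apply/ler_addgt0Pr => e e_gt0.
  have [m nm /(_ j)] := cl e e_gt0 n; rewrite ltr_norml => /andP[_ near_m].
  have : orbit_min x m <= iter m F x j := vmin_le _ j.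
  have := orbit_min_nondecreasing Ix nm; lra.
have [m nm /(_ j)] := cl e e_gt0 n; rewrite ltr_norml => /andP[near_m _].
have : iter m F x j <= orbit_max x m := vmax_ge _ j.
have := orbit_max_nonincreasing Ix nm; lra.
Qed.

Lemma orbit_cluster_inI x y : inI I x -> orbit_cluster x y -> inI I y.
Proof.
move=> Ix cl j; have [lo hi] := orbit_cluster_bounds 0 j Ix cl.
exact: (interval_vmin_vmax (c := y j) p_gt0 I_interval Ix lo hi).
Qed.

Lemma orbit_cluster_iter x y n : inI I x -> orbit_cluster x y ->
  orbit_cluster x (iter n F y).
Proof.
move=> Ix cl e e_gt0 N.
have [δ δ_gt0 δP] := iter_continuous n (orbit_cluster_inI Ix cl) e_gt0.
have [m Nm near_m] := cl δ δ_gt0 N.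
exists (n + m)%N => [|j]; first exact: leq_trans Nm (leq_addl _ _).
by rewrite iterD; apply: δP => //; apply: inI_iter.
Qed.

Lemma orbit_cluster_vmin x y : inI I x -> orbit_cluster x y -> vmin y = lower_mean x.
Proof.
move=> Ix cl; apply/le_anti/andP; split; last first.
  apply: lower_mean_le => n; apply: (le_vmin p_gt0) => j.
  by have [] := orbit_cluster_bounds n j Ix cl.
apply/ler_addgt0Pr => e e_gt0; have [n _ /(_ _)near_n] := cl e e_gt0 0%N.
have [j min_j] := vminP p_gt0 (iter n F x).
have := orbit_min_le_lower n Ix; have := vmin_le y j; have := near_n j.
by rewrite ltr_norml /orbit_min min_j => /andP[]; lra.
Qed.

Lemma orbit_cluster_vmax x y : inI I x -> orbit_cluster x y -> vmax y = upper_mean x.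
Proof.
move=> Ix cl; apply/le_anti/andP; split.
  apply: le_upper_mean => n; apply: (vmax_le p_gt0) => j.
  by have [] := orbit_cluster_bounds n j Ix cl.
apply/ler_addgt0Pr => e e_gt0; have [n _ /(_ _)near_n] := cl e e_gt0 0%N.
have [j max_j] := vmaxP p_gt0 (iter n F x).
have := upper_le_orbit_max n Ix; have := vmax_ge y j; have := near_n j.
by rewrite ltr_norml /orbit_max max_j => /andP[]; lra.
Qed.

(* By strictness, an extremal value taken at [i] at time [n + 1] is taken at
   every predecessor of [i] at time [n]. *)
Lemma walkn_iter_extremal y c n r i : inI I y ->
  (forall m j, c <= iter m F y j) \/ (forall m j, iter m F y j <= c) ->
  walkn E n r i -> iter n F y i = c -> y r = c.
Proof.
move=> Iy bound_c; elim: n i => [i /= -> //|n IHn i [w Wrw /existsP[j0 /eqP def_w]] Fi].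
apply: (IHn _ Wrw); rewrite -def_w.
apply: (strict_mean_extremal (z := fun j => iter n F y (alpha i j)) (d_gt0 i) (M_strict i) _ Fi).
  by move=> j; apply: inI_iter.
by case: bound_c => [lo|hi]; [left | right] => j.
Qed.

Lemma ergodic_means_eq : ergodic (root_set E) E ->
  forall x, inI I x -> lower_mean x = upper_mean x.
Proof.
move=> erg x Ix; have [r0 _ [N walk_N]] := ergodic_primitive erg.
have [y cl_y] := orbit_cluster_exists Ix.
have Iy := orbit_cluster_inI Ix cl_y.
have cl_iter m := orbit_cluster_iter m Ix cl_y.
have [i1 min_i1] := vminP p_gt0 (iter N F y).
have [i2 max_i2] := vmaxP p_gt0 (iter N F y).
have <- : y r0 = lower_mean x.
  apply: (walkn_iter_extremal Iy _ (walk_N N (leqnn N) i1)).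
    by left=> m j; rewrite -(orbit_cluster_vmin Ix (cl_iter m)); apply: vmin_le.
  by rewrite -min_i1 (orbit_cluster_vmin Ix (cl_iter N)).
apply: (walkn_iter_extremal Iy _ (walk_N N (leqnn N) i2)).
  by right=> m j; rewrite -(orbit_cluster_vmax Ix (cl_iter m)); apply: vmax_ge.
by rewrite -max_i2 (orbit_cluster_vmax Ix (cl_iter N)).
Qed.

Lemma iter_cst_on (S : nat -> 'I_p -> Prop) c x : inI I x ->
  (forall n u v, E u v -> S n.+1 v -> S n u) -> (forall v, S 0%N v -> x v = c) ->
  forall n v, S n v -> iter n F x v = c.
Proof.
move=> Ix S_pred x_c; elim=> [|n IHn] v Sv; first exact: x_c.
rewrite iterS /Malpha; apply: (mean_cst (d_gt0 v) (@M_mean v)) => [j|j]; first exact: inI_iter.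
by apply: IHn; apply: S_pred Sv; apply/existsP; exists j.
Qed.

Lemma separated_orbit_means x al be :
  (forall n, exists v, iter n F x v = al) -> (forall n, exists v, iter n F x v = be) ->
  lower_mean x <= al /\ be <= upper_mean x.
Proof.
move=> lo hi; split; [apply: lower_mean_le | apply: le_upper_mean] => n.
  by have [v <-] := lo n; apply: vmin_le.
by have [v <-] := hi n; apply: vmax_ge.
Qed.

Lemma means_eq_root_connect : (forall x, inI I x -> lower_mean x = upper_mean x) ->
  forall a b, a \in root_set E -> b \in root_set E -> connect E a b.
Proof.
move=> eq_means a b aV bV; apply: contrapT => nab.
have [al [be [Ial [Ibe al_lt_be]]]] := I_interval.2.
pose x v := if v \in scc E a then al else be.
have Ix : inI I x by move=> v; rewrite /x; case: ifP.
have x_on (S : {set 'I_p}) c : (forall u v, E u v -> v \in S -> u \in S) ->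
    (forall v, v \in S -> x v = c) -> forall n v, v \in S -> iter n F x v = c.
  by move=> S_pred Sc; apply: (iter_cst_on (S := fun _ v => v \in S)) => // n; apply: S_pred.
have [] := separated_orbit_means (x := x) (al := al) (be := be) => [n|n|lo hi].
- exists a; apply: (x_on (scc E a)) => [u v Euv|v va|]; last exact: scc_refl.
    exact: root_scc_pred aV Euv.
  by rewrite /x va.
- exists b; apply: (x_on (scc E b)) => [u v Euv|v vb|]; last exact: scc_refl.
    exact: root_scc_pred bV Euv.
  rewrite /x ifF //; apply/negP => va; apply: nab.
  by move: va vb; rewrite !inE => /andP[_ av] /andP[vb _]; apply: connect_trans av vb.
- by have := eq_means x Ix; lra.
Qed.

Lemma means_eq_root_aperiodic : (forall x, inI I x -> lower_mean x = upper_mean x) ->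
  forall k, (1 < k)%N -> exists a s, [/\ walk_in (root_set E) E a s, last a s = a,
                                        (0 < size s)%N & ~~ (k %| size s)%N].
Proof.
move=> eq_means k k_gt1; apply: contrapT => no_cycle.
have root_cycle_dvd a s : walk_in (root_set E) E a s -> last a s = a -> (k %| size s)%N.
  move=> Ws lst; have [->//|s_gt0] := posnP (size s).
  by apply/negPn/negP => ndvd; apply: no_cycle; exists a, s.
have [r0 r0V _] := exists_root_connect E (Ordinal p_gt0).
have has_pred v : exists u, E u v.
  by exists (alpha v (Ordinal (d_gt0 v))); apply/existsP; eexists.
have [al [be [Ial [Ibe al_lt_be]]]] := I_interval.2.
pose x v := if `[< phase E k r0 v 0 >] then be else al.
have Ix : inI I x by move=> v; rewrite /x; case: ifP.
have in_phase n v : v \in scc E r0 -> phase E k r0 v n -> iter n F x v = be.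
  move=> vr phv; apply: (iter_cst_on (S := fun n v => v \in scc E r0 /\ phase E k r0 v n)) => //.
    move=> m u w Euw [wr phw]; split; first exact: root_scc_pred r0V Euw wr.
    by apply/(phase_edge r0V root_cycle_dvd m Euw wr).
  by move=> w [_ phw]; rewrite /x asboolT.
have off_phase n v : v \in scc E r0 -> ~ phase E k r0 v n -> iter n F x v = al.
  move=> vr phv; apply: (iter_cst_on (S := fun n v => v \in scc E r0 /\ ~ phase E k r0 v n)) => //.
    move=> m u w Euw [wr phw]; split; first exact: root_scc_pred r0V Euw wr.
    by move/(phase_edge r0V root_cycle_dvd m Euw wr).
  by move=> w [_ phw]; rewrite /x asboolF.
have [lo hi] : lower_mean x <= al /\ be <= upper_mean x.
  apply: separated_orbit_means => n;
    have [[v vr phv] [w wr nphw]] := phase_split k_gt1 r0V root_cycle_dvd n has_pred.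
    by exists w; apply: off_phase.
  by exists v; apply: in_phase.
by have := eq_means x Ix; lra.
Qed.

End InvariantMeans.

Theorem theorem3p3 (R : realType) (I : R -> Prop) (p : nat) (d : 'I_p -> nat)
  (alpha : forall i : 'I_p, 'I_(d i) -> 'I_p)
  (M : forall i : 'I_p, ('I_(d i) -> R) -> R) :
  is_interval I -> (0 < p)%N -> (forall i, 0 < d i)%N ->
  (forall i, is_strict_mean I (M i)) ->
  (forall i, continuous_on_Ik I (M i)) ->
  ((exists K : ('I_p -> R) -> R,
      is_mean I K /\ is_invariant I (Malpha M alpha) K /\
      (forall K' : ('I_p -> R) -> R,
         is_mean I K' -> is_invariant I (Malpha M alpha) K' ->
         forall x, inI I x -> K' x = K x))
   <->
   ergodic (root_set (incidence_rel alpha)) (incidence_rel alpha)).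
Proof.
move=> I_interval p_gt0 d_gt0 M_strict M_continuous.
rewrite (unique_invariant_meanP alpha I_interval p_gt0 d_gt0 M_strict).
split=> [eq_means|]; last exact: ergodic_means_eq I_interval p_gt0 d_gt0 M_strict M_continuous.
have root_connect := means_eq_root_connect I_interval d_gt0 M_strict eq_means.
split; [apply/set0Pn | move=> a b aV bV |].
- by have [r rV _] := exists_root_connect (incidence_rel alpha) (Ordinal p_gt0); exists r.
- exact: root_connect_walk_in bV (root_connect a b aV bV).
- exact: means_eq_root_aperiodic I_interval p_gt0 d_gt0 M_strict eq_means.
Qed.
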